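(* Let $u=[u_i]_{i\in[n]}$ ($n\in\{1,2,\dots\}\cup\{\infty\}$) be an invertible row operator on $\mathcal H$ with inverse $v=[v_i]_{i\in[n]}^t$, and let $\alpha$ be the endomorphism of $B(\mathcal H)$ given by $\alpha(x)=\sum_{i\in[n]}u_ixv_i$. Then for any $x,y\in B(\mathcal H)$: $\alpha(x)y=y\alpha(x)$ if and only if $x\,v_jyu_k=v_jyu_k\,x$ for all $j,k\in[n]$.
   Context: A row $u=[u_i]_{i\in[n]}\in B(\mathcal H\otimes\ell^2(n),\mathcal H)$ is invertible with inverse the column $v=[v_i]^t\in B(\mathcal H,\mathcal H\otimes\ell^2(n))$ if $vu=I_{\mathcal H\otimes\ell^2(n)}$ (equivalently $v_iu_j=\delta_{ij}I$) and $\sum_iu_iv_i=I_{\mathcal H}$ (strong operator topology). *)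

From HB Require Import structures.
From mathcomp Require Import all_boot all_order all_algebra.
From mathcomp Require Import all_classical all_reals all_analysis.
From mathcomp Require Import complex sesquilinear.
Set Implicit Arguments. Unset Strict Implicit. Unset Printing Implicit Defensive.
Import Order.TTheory GRing.Theory Num.Theory.
Import numFieldNormedType.Exports.
Local Open Scope ring_scope.
Local Open Scope complex_scope.
Local Open Scope classical_set_scope.

(* The index set [n] for n in {1,2,...} ∪ {∞}: n = Some m means [n] = {0,...,m-1},
   n = None means [n] = ℕ (n = ∞). *)
Definition in_idx (n : option nat) (i : nat) : bool :=
  if n is Some m then (i < m)%N else true.

Definition induces_norm (R : realType) (H : completeNormedModType R[i])
  (ip : {dot H for Num.conj}) : Prop :=
  forall h : H, (Num.norm h) ^+ 2 = ip h h.

Definition bounded_op (R : realType) (H : completeNormedModType R[i])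
  (x : H -> H) : Prop := linear x /\ continuous x.

Definition psum (R : realType) (H : completeNormedModType R[i])
  (n : option nat) (f : nat -> H) (N : nat) : H :=
  \sum_(0 <= i < N | in_idx n i) f i.

(* The row u = [u_i]_{i∈[n]} is a bounded operator H ⊗ ℓ²(n) -> H,
   (ξ_i)_i ↦ Σ_i u_i ξ_i: each u_i ∈ B(H) and there is C with
   ‖Σ_i u_i ξ_i‖² ≤ C Σ_i ‖ξ_i‖² for every finitely supported ξ. *)
Definition row_op (R : realType) (H : completeNormedModType R[i])
  (n : option nat) (u : nat -> H -> H) : Prop :=
  (forall i, in_idx n i -> bounded_op (u i)) /\
  exists C : R, forall (xi : nat -> H) (N : nat),
    (Num.norm (psum n (fun i => u i (xi i)) N)) ^+ 2 <=
    C%:C * \sum_(0 <= i < N | in_idx n i) (Num.norm (xi i)) ^+ 2.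

(* The column v = [v_i]^t is a bounded operator H -> H ⊗ ℓ²(n),
   h ↦ (v_i h)_i: each v_i ∈ B(H) and Σ_i ‖v_i h‖² ≤ C ‖h‖². *)
Definition col_op (R : realType) (H : completeNormedModType R[i])
  (n : option nat) (v : nat -> H -> H) : Prop :=
  (forall i, in_idx n i -> bounded_op (v i)) /\
  exists C : R, forall (h : H) (N : nat),
    \sum_(0 <= i < N | in_idx n i) (Num.norm (v i h)) ^+ 2 <=
    C%:C * (Num.norm h) ^+ 2.

(* The row u is invertible with inverse the column v:
   v_i u_j = δ_ij I and Σ_i u_i v_i = I in the strong operator topology. *)
Definition row_inverse (R : realType) (H : completeNormedModType R[i])
  (n : option nat) (u v : nat -> H -> H) : Prop :=
  row_op n u /\ col_op n v /\
  (forall i j, in_idx n i -> in_idx n j ->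
     v i \o u j = if i == j then id else (fun _ => 0)) /\
  (forall h : H, psum n (fun i => u i (v i h)) @ \oo --> h).

Definition alpha (R : realType) (H : completeNormedModType R[i])
  (n : option nat) (u v : nat -> H -> H) (x : H -> H) : H -> H :=
  fun h => lim (psum n (fun i => u i (x (v i h))) @ \oo).

From HB Require Import structures.
From mathcomp Require Import all_boot all_order all_algebra.
From mathcomp Require Import all_classical all_reals all_analysis.
From mathcomp Require Import complex sesquilinear.
From mathcomp Require Import lra.
Import Order.TTheory GRing.Theory Num.Theory.
Import numFieldNormedType.Exports.
Local Open Scope ring_scope.
Local Open Scope classical_set_scope.

(* Since v_j u_i = δ_ij and v_j is continuous, v_j α(x) = x v_j and α(x) u_k = u_k x.
   Hence if α(x) commutes with y, then
   x v_j y u_k = v_j α(x) y u_k = v_j y α(x) u_k = v_j y u_k x.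
   Conversely, passing to the limit in
   x v_i y (Σ_k u_k v_k h) = v_i y (Σ_k u_k x v_k h) gives x v_i y = v_i y α(x), so
   α(x) y h = Σ_i u_i x v_i y h = Σ_i u_i v_i y α(x) h = y α(x) h.
   The series defining α(x) h converges by the row bound
   ‖Σ_i u_i ξ_i‖² ≤ C Σ_i ‖ξ_i‖² for ξ_i = x v_i h, whose norms are square-summable
   by the column bound on v. *)

Section LinearMaps.
Context {K : pzRingType} {U V : lmodType K}.

Definition linear_of {f : U -> V} (lin_f : linear f) : {linear U -> V} :=
  HB.pack f (GRing.isLinear.Build K U V *:%R f lin_f).

Lemma linear_fun0 {f : U -> V} : linear f -> f 0 = 0.
Proof. by move=> lin_f; exact: (raddf0 (linear_of lin_f)). Qed.

Lemma linear_fun_sum {f : U -> V} {I : Type} {r : seq I} {P : pred I} {F : I -> U} :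
  linear f -> f (\sum_(i <- r | P i) F i) = \sum_(i <- r | P i) f (F i).
Proof. by move=> lin_f; exact: (raddf_sum (linear_of lin_f)). Qed.

End LinearMaps.

Lemma bounded_op_comp {R : realType} {H : completeNormedModType R[i]} {f g : H -> H} :
  bounded_op f -> bounded_op g -> bounded_op (f \o g).
Proof.
move=> [lin_f cont_f] [lin_g cont_g]; split; first by move=> a p q /=; rewrite lin_g lin_f.
by move=> h; apply: continuous_comp; [exact: cont_g | exact: cont_f].
Qed.

Section RealNorm.
Context {R : realType} {H : completeNormedModType R[i]}.

Lemma ger0_ReE {z : R[i]} : 0 <= z -> z = (complex.Re z)%:C%C.
Proof. by move=> z0; rewrite {1}[z]complexE (ger0_Im z0) mulr0 addr0. Qed.

(* Norms on a normed space over R[i] are R[i]-valued; [rnorm] takes them back to R. *)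
Definition rnorm (h : H) : R := complex.Re `|h|.

Lemma normE (h : H) : `|h| = (rnorm h)%:C%C.
Proof. exact/ger0_ReE/normr_ge0. Qed.

Lemma rnorm_ge0 (h : H) : 0 <= rnorm h.
Proof. by have := normr_ge0 h; rewrite normE lecR. Qed.

Lemma rnorm0 : rnorm 0 = 0.
Proof. by rewrite /rnorm normr0. Qed.

Lemma rnorm_sqrE (h : H) : ((rnorm h) ^+ 2)%:C%C = `|h| ^+ 2.
Proof. by rewrite normE rmorphXn. Qed.

Lemma linear_rnorm_bounded {f : H -> H} : bounded_op f ->
  exists k : R, forall h, rnorm (f h) <= k * rnorm h.
Proof.
move=> [lin_f cont_f].
have /linear_bounded_continuous/linear_boundedP/pinfty_ex_gt0 [k k0 fk] :
  continuous (linear_of lin_f) by [].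
exists (complex.Re k) => h; rewrite -lecR rmorphM /= -!normE -(ger0_ReE (ltW k0)).
exact: fk.
Qed.

End RealNorm.

Lemma lt_of_sqr_le_mul (R : realFieldType) (a c s e : R) :
  0 <= a -> 0 < e -> a ^+ 2 <= c * s -> `|s| < e ^+ 2 / (`|c| + 1) -> a < e.
Proof.
move=> a0 e0 acs; rewrite ltr_pdivlMr ?ltr_wpDl // => small.
have : c * s <= `|c| * `|s| by rewrite -normrM ler_norm.
have := normr_ge0 s; nra.
Qed.

Lemma continuous_cvg_eq {K : numFieldType} {V W : normedModType K}
  (f g : V -> W) (s t : nat -> V) (a b : V) :
  continuous f -> continuous g -> s @ \oo --> a -> t @ \oo --> b ->
  (forall N, f (s N) = g (t N)) -> f a = g b.
Proof.
move=> cf cg sa tb fg; have fgE : f \o s = g \o t by apply: funext.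
apply: (cvg_unique (@norm_hausdorff _ W) (continuous_cvg _ (cf a) sa)).
by rewrite fgE; exact: (continuous_cvg _ (cg b) tb).
Qed.

Section IndexedSums.
Context {R : realType} {H : completeNormedModType R[i]} {n : option nat}.

Lemma sum_in_idx_seriesE {V : zmodType} (f : nat -> V) (N : nat) :
  \sum_(0 <= i < N | in_idx n i) f i = series (fun i => if in_idx n i then f i else 0) N.
Proof. by rewrite /series /= big_mkcond. Qed.

Lemma psum_delta_cvg {f : nat -> H} {k : nat} {a : H} : in_idx n k ->
  (forall i, in_idx n i -> f i = if i == k then a else 0) -> psum n f @ \oo --> a.
Proof.
move=> nk fE; apply: cvg_near_cst; exists k.+1 => // N /= kN.
rewrite /psum (eq_bigr _ fE) big_mkcond /= (bigD1_seq k) ?iota_uniq ?mem_index_iota //=.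
by rewrite nk eqxx big1 ?addr0 // => i /negbTE ->; case: in_idx.
Qed.

Lemma row_op_interval_bound {u : nat -> H -> H} : row_op n u ->
  exists C : R, forall (xi : nat -> H) (N M : nat),
    rnorm (\sum_(N <= i < M | in_idx n i) u i (xi i)) ^+ 2 <=
    C * \sum_(N <= i < M | in_idx n i) rnorm (xi i) ^+ 2.
Proof.
move=> [bounded_u [C uC]]; exists C => xi N M.
have [NM | MN] := leqP N M; last by rewrite !big_geq ?rnorm0 ?expr0n ?mulr0 // ltnW.
pose xiN i := if (N <= i)%N then xi i else 0.
have truncE (V : zmodType) (g : nat -> H -> V) : (forall i, in_idx n i -> g i 0 = 0) ->
    \sum_(0 <= i < M | in_idx n i) g i (xiN i) = \sum_(N <= i < M | in_idx n i) g i (xi i).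
  move=> g0; rewrite (big_cat_nat (leq0n N) NM) /= big_nat_cond big1 ?add0r.
    rewrite big_nat_cond [RHS]big_nat_cond.
    by apply: eq_bigr => i /andP [/andP [Ni _] _]; rewrite /xiN /= Ni.
  by move=> i /andP [/andP [_ iN] ni]; rewrite /xiN /= leqNgt iN g0.
rewrite -(truncE _ u) => [|i /bounded_u [/linear_fun0 //]].
rewrite -(truncE _ (fun _ h => rnorm h ^+ 2)) => [|i _]; last by rewrite rnorm0 expr0n.
rewrite -lecR rnorm_sqrE rmorphM rmorph_sum /=.
rewrite (eq_bigr (fun i => `|xiN i| ^+ 2)) => [|i _]; last exact: rnorm_sqrE.
exact: uC.
Qed.

Lemma row_op_cvg {u : nat -> H -> H} {xi : nat -> H} (B : R) : row_op n u ->
  (forall N, \sum_(0 <= i < N | in_idx n i) rnorm (xi i) ^+ 2 <= B) ->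
  cvgn (psum n (fun i => u i (xi i))).
Proof.
move=> /row_op_interval_bound [C uC] xiB.
pose t := series (fun i => if in_idx n i then rnorm (xi i) ^+ 2 else 0).
have : cvgn t.
  apply: nondecreasing_is_cvgn; last by exists B => _ [N _ <-]; rewrite /t -sum_in_idx_seriesE.
  move=> N M NM; rewrite /t -!sum_in_idx_seriesE.
  by apply: nondecreasing_series => // i _ _; exact: sqr_ge0.
move=> /cvg_cauchy /cauchy_seriesP t_cauchy.
rewrite [psum _ _](funext (sum_in_idx_seriesE _)).
apply: cauchy_cvg; apply/cauchy_seriesP => e e0.
have eE := ger0_ReE (ltW e0).
have d0 : 0 < complex.Re e ^+ 2 / (`|C| + 1).
  by rewrite divr_gt0 ?ltr_wpDl // exprn_gt0 // -ltcR -eE.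
apply: filterS (t_cauchy _ d0) => -[N M] /= small.
rewrite -big_mkcond normE eE ltcR.
apply: lt_of_sqr_le_mul (rnorm_ge0 _) _ (uC xi N M) _; first by rewrite -ltcR -eE.
by rewrite big_mkcond.
Qed.

End IndexedSums.

Lemma col_op_rnorm_bound {R : realType} {H : completeNormedModType R[i]}
  {n : option nat} {v : nat -> H -> H} : col_op n v ->
  exists C : R, forall (h : H) (N : nat),
    \sum_(0 <= i < N | in_idx n i) rnorm (v i h) ^+ 2 <= C * rnorm h ^+ 2.
Proof.
move=> [_ [C vC]]; exists C => h N; rewrite -lecR rmorph_sum rmorphM /= rnorm_sqrE.
rewrite (eq_bigr (fun i => `|v i h| ^+ 2)) => [|i _]; last exact: rnorm_sqrE.
exact: vC.
Qed.

Section RowInverse.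
Context {R : realType} {H : completeNormedModType R[i]} {n : option nat}.
Context {u v : nat -> H -> H} {x : H -> H}.
Hypotheses (uv : row_inverse n u v) (bounded_x : bounded_op x).

Let u_bounded {i} : in_idx n i -> bounded_op (u i). Proof. by case: uv => [[ub _] _]; exact: ub. Qed.
Let v_bounded {i} : in_idx n i -> bounded_op (v i). Proof. by case: uv => _ [[vb _] _]; exact: vb. Qed.

Lemma row_inverse_vuE (i j : nat) (z : H) : in_idx n i -> in_idx n j ->
  v i (u j z) = if i == j then z else 0.
Proof.
case: uv => _ [_ [vu _]] ni nj.
by have /= -> := congr1 (fun f => f z) (vu i j ni nj); case: eqP.
Qed.

Lemma alpha_psum_cvg (h : H) :
  psum n (fun i => u i (x (v i h))) @ \oo --> alpha n u v x h.
Proof.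
have [k xk] := linear_rnorm_bounded bounded_x.
have [C vC] := col_op_rnorm_bound uv.2.1.
apply: (row_op_cvg (k ^+ 2 * (C * rnorm h ^+ 2)) uv.1) => N.
apply: le_trans (ler_wpM2l (sqr_ge0 k) (vC h N)); rewrite mulr_sumr.
apply: ler_sum => i _; have := xk (v i h).
have := rnorm_ge0 (x (v i h)); have := rnorm_ge0 (v i h); nra.
Qed.

Lemma alpha_uE (k : nat) (z : H) : in_idx n k -> alpha n u v x (u k z) = u k (x z).
Proof.
move=> nk; apply: cvg_lim; first exact: norm_hausdorff.
apply: (psum_delta_cvg nk) => i ni; rewrite row_inverse_vuE //.
case: eqP => [-> // | _].
by rewrite (linear_fun0 bounded_x.1) (linear_fun0 (u_bounded ni).1).
Qed.

Lemma v_alphaE (j : nat) (w : H) : in_idx n j -> v j (alpha n u v x w) = x (v j w).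
Proof.
move=> nj; pose t := psum n (fun i => v j (u i (x (v i w)))).
apply: (continuous_cvg_eq (v j) id _ t _ _ (v_bounded nj).2 (fun _ => cvg_id)).
- exact: alpha_psum_cvg.
- apply: (psum_delta_cvg nj) => i ni.
  by rewrite row_inverse_vuE // eq_sym; case: eqP => [-> | _].
- by move=> N; rewrite /psum /t (linear_fun_sum (v_bounded nj).1).
Qed.

Lemma alpha_eq_of_v (w a : H) : (forall i, in_idx n i -> x (v i w) = v i a) ->
  alpha n u v x w = a.
Proof.
move=> xv_va; rewrite /alpha; apply: cvg_lim; first exact: norm_hausdorff.
have -> : psum n (fun i => u i (x (v i w))) = psum n (fun i => u i (v i a)).
  by apply: funext => N; apply: eq_bigr => i ni; rewrite xv_va.
by case: uv => _ [_ [_]]; apply.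
Qed.

Lemma alpha_commute_vyu {y : H -> H} :
  alpha n u v x \o y = y \o alpha n u v x ->
  forall j k, in_idx n j -> in_idx n k ->
    x \o (v j \o y \o u k) = (v j \o y \o u k) \o x.
Proof.
move=> comm j k nj nk; apply: funext => z /=.
by rewrite -v_alphaE // -[alpha _ _ _ _ (y _)]/((alpha n u v x \o y) _) comm /= alpha_uE.
Qed.

Lemma vyu_commute_alpha {y : H -> H} : bounded_op y ->
  (forall j k, in_idx n j -> in_idx n k ->
    x \o (v j \o y \o u k) = (v j \o y \o u k) \o x) ->
  alpha n u v x \o y = y \o alpha n u v x.
Proof.
move=> bounded_y comm; apply: funext => h /=; apply: alpha_eq_of_v => i ni.
have vy_bounded := bounded_op_comp (v_bounded ni) bounded_y.
have xvy_bounded := bounded_op_comp bounded_x vy_bounded.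
apply: (continuous_cvg_eq _ _ _ _ _ _ xvy_bounded.2 vy_bounded.2).
- by case: uv => _ [_ [_]]; apply.
- exact: alpha_psum_cvg.
- move=> N; rewrite /psum (linear_fun_sum xvy_bounded.1) (linear_fun_sum vy_bounded.1).
  by apply: eq_bigr => k nk; have /= -> := congr1 (fun f => f (v k h)) (comm i k ni nk).
Qed.

End RowInverse.

Theorem proposition3p6 (R : realType) (H : completeNormedModType R[i])
  (ip : {dot H for Num.conj}) (Hip : induces_norm ip)
  (n : option nat) (Hn : n <> Some 0%N)
  (u v : nat -> H -> H) (Huv : row_inverse n u v)
  (x y : H -> H) (Hx : bounded_op x) (Hy : bounded_op y) :
  (alpha n u v x \o y = y \o alpha n u v x) <->
  (forall j k : nat, in_idx n j -> in_idx n k ->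
     x \o (v j \o y \o u k) = (v j \o y \o u k) \o x).
Proof.
split=> comm.
- exact: (alpha_commute_vyu Huv Hx comm).
- exact: (vyu_commute_alpha Huv Hx Hy comm).
Qed.
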